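(* Let $\ell,m,n$ be positive integers with $\ell<n$, $m<n$, $\gcd(m,n)=1$, and let $\mathcal{X},\mathcal{Y},\hat{\mathcal{X}},\hat{\mathcal{Y}},\check{\mathcal{X}},\check{\mathcal{Y}}$ be the words defined in the context from $\mathcal{F}[\ell,m,n]$. Then $$\mathcal{X}\check{\mathcal{X}}=\hat{\mathcal{X}}\mathcal{X}^{\overline0},\qquad \mathcal{Y}\hat{\mathcal{X}}=\check{\mathcal{X}}\mathcal{Y}^{\overline0},\qquad \hat{\mathcal{Y}}\mathcal{X}=\mathcal{X}^{\overline0}\check{\mathcal{Y}},\qquad \check{\mathcal{Y}}\mathcal{Y}=\mathcal{Y}^{\overline0}\hat{\mathcal{Y}}.$$
   Context: For positive integers $\ell<n$, $m<n$, $\gcd(m,n)=1$, $\mathcal{S}=\mathcal{F}[\ell,m,n]$ is the $n$-periodic sequence with $\mathcal{S}_i=L$ if $im\bmod n<\ell$ and $R$ otherwise; indices are taken mod $n$; $d\in\{1,\dots,n-1\}$ is the inverse of $m$ mod $n$. Words are finite strings over $\{L,R\}$ indexed from $0$; juxtaposition is concatenation; $\mathcal{W}^{\overline0}$ is $\mathcal{W}$ with its index-$0$ symbol changed. For an integer $p$ and $q\ge1$, $\mathcal{S}[p;q]=\mathcal{S}_p\cdots\mathcal{S}_{p+q-1}$. Define $\mathcal{X}=\mathcal{S}[0;\ell d\bmod n]$, $\mathcal{Y}=\mathcal{S}_{\ell d\bmod n}\cdots\mathcal{S}_{n-1}$, $\hat{\mathcal{X}}=\mathcal{S}_0\cdots\mathcal{S}_{n-d-1}$,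 $\hat{\mathcal{Y}}=\mathcal{S}_{n-d}\cdots\mathcal{S}_{n-1}$, $\check{\mathcal{X}}=\mathcal{S}[\ell d;n-d]$ (cyclically from index $\ell d\bmod n$ to $((\ell-1)d-1)\bmod n$), $\check{\mathcal{Y}}=\mathcal{S}[(\ell-1)d;d]$ (cyclically from index $(\ell-1)d\bmod n$ to $(\ell d-1)\bmod n$). *)

From mathcomp Require Import all_boot.
Set Implicit Arguments. Unset Strict Implicit. Unset Printing Implicit Defensive.

(* Words over {L,R}: encoded as seq bool, with true = L and false = R. *)

Definition Fseq (l m n : nat) (i : nat) : bool := (i * m %% n < l).

Definition subw (l m n p q : nat) : seq bool :=
  mkseq (fun k => Fseq l m n ((p + k) %% n)) q.

Definition flip0 (w : seq bool) : seq bool :=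
  match w with [::] => [::] | b :: t => ~~ b :: t end.

Definition is_inv_mod (m n d : nat) : Prop := 1 <= d <= n.-1 /\ d * m %% n = 1 %% n.

Definition wX (l m n d : nat) := subw l m n 0 ((l * d) %% n).
Definition wY (l m n d : nat) := subw l m n ((l * d) %% n) (n - (l * d) %% n).
Definition wXh (l m n d : nat) := subw l m n 0 (n - d).
Definition wYh (l m n d : nat) := subw l m n (n - d) d.
Definition wXc (l m n d : nat) := subw l m n ((l * d) %% n) (n - d).
Definition wYc (l m n d : nat) := subw l m n (((l - 1) * d) %% n) d.

From mathcomp Require Import all_boot zify.

(* Since d m = 1 (mod n), advancing an index by d raises i m mod n by one, so
   S_(i+d) differs from S_i exactly when i + d is congruent to 0 or to l d (the
   indices where i m mod n is 0 or l).  Hence shifting a factor of S by -d flips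
   its first letter and nothing else as soon as that first letter is the only
   such index it covers, which holds for X (starting at 0) and Y (starting at
   l d).  Each identity is two factorizations of one cyclic factor of S, as
   [S[p;q1] S[p+q1;q2] = S[p;q1+q2] = S[p;q2] S[p+q2;q1]], in which one factor
   is such a shift and the other matches up to a period. *)

Lemma Fseq_mod l m n i j : i = j %[mod n] -> Fseq l m n i = Fseq l m n j.
Proof. by move=> eq_ij; rewrite /Fseq -modnMml eq_ij modnMml. Qed.

Lemma Fseq_modn l m n i : Fseq l m n (i %% n) = Fseq l m n i.
Proof. by apply: Fseq_mod; rewrite modn_mod. Qed.

Lemma subw_mod l m n p p' q :
  p = p' %[mod n] -> subw l m n p q = subw l m n p' q.
Proof.
move=> eq_pp'; apply: eq_map => k; apply: Fseq_mod.
by rewrite -modnDml eq_pp' modnDml.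
Qed.

Lemma subw_cat l m n p q1 q2 :
  subw l m n p q1 ++ subw l m n (p + q1) q2 = subw l m n p (q1 + q2).
Proof.
rewrite /subw /mkseq iotaD map_cat add0n -[in iota q1 _](addn0 q1) iotaDl -map_comp.
by congr (_ ++ _); apply: eq_map => k /=; rewrite addnA.
Qed.

Lemma subw_cat_mod l m n p p2 q1 q2 : p2 = p + q1 %[mod n] ->
  subw l m n p q1 ++ subw l m n p2 q2 = subw l m n p q2 ++ subw l m n (p + q2) q1.
Proof. by move/subw_mod->; rewrite !subw_cat addnC. Qed.

Lemma flip0_mkseq (f : nat -> bool) q :
  flip0 (mkseq f q) = mkseq (fun k => f k (+) (k == 0)) q.
Proof.
case: q => [//|q]; rewrite /mkseq /= addbT; congr (_ :: _).
by apply/eq_in_map => k; rewrite mem_iota => /andP [k_gt0 _]; rewrite gtn_eqF // addbF.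
Qed.

Section Shift.

Variables l m n d : nat.
Hypotheses (l_gt0 : 0 < l) (l_lt_n : l < n) (d_le_n : d <= n) (dmK : d * m %% n = 1).

Let n_gt0 : 0 < n. Proof. by apply: leq_trans l_lt_n. Qed.

Let a := l * d %% n.
Let b := (l - 1) * d %% n.
Let a_lt_n : a < n. Proof. exact: ltn_pmod. Qed.

Lemma mulm_modnK i : (i * m %% n) * d %% n = i %% n.
Proof. by rewrite modnMml -mulnA [m * d]mulnC -modnMmr dmK muln1. Qed.

Lemma mulm_modn_eq0 i : (i * m %% n == 0) = (i %% n == 0).
Proof.
apply/eqP/eqP => [im0|i0]; last by rewrite -modnMml i0 mul0n mod0n.
by rewrite -mulm_modnK im0 mul0n mod0n.
Qed.

Lemma mulm_modn_eql i : (i * m %% n == l) = (i %% n == a).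
Proof.
apply/eqP/eqP => [iml|ia]; first by rewrite -mulm_modnK iml.
by rewrite -modnMml ia modnMml -mulnA -modnMmr dmK muln1 modn_small.
Qed.

Definition boundary i := (i %% n == 0) || (i %% n == a).

Lemma Fseq_addd i : Fseq l m n (i + d) = Fseq l m n i (+) boundary (i + d).
Proof.
rewrite /boundary -mulm_modn_eq0 -mulm_modn_eql /Fseq.
have -> : (i + d) * m %% n = (i * m %% n).+1 %% n.
  by rewrite mulnDl -modnDm dmK addn1.
have : i * m %% n < n := ltn_pmod _ n_gt0.
move: (i * m %% n) => r; rewrite leq_eqVlt => /orP [/eqP rn | r_lt].
  by rewrite rn modnn l_gt0 eqxx leqNgt l_lt_n.
rewrite modn_small //; case: ltngtP => rl; apply/esym; lia.
Qed.

Lemma subw_flip0 {p p' q} : p' + d = p %[mod n] ->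
  (forall j, j < q -> boundary (p + j) = (j == 0)) ->
  subw l m n p' q = flip0 (subw l m n p q).
Proof.
move=> eq_p'p bnd; rewrite /subw flip0_mkseq; apply/eq_in_map => k.
rewrite mem_iota add0n => /andP [_ k_lt_q]; rewrite !Fseq_modn -(bnd k k_lt_q).
have eq_shift : p' + k + d = p + k %[mod n] by rewrite addnAC -modnDml eq_p'p modnDml.
rewrite -(Fseq_mod _ _ _ _ _ eq_shift) Fseq_addd /boundary eq_shift.
by rewrite -addbA addbb addbF.
Qed.

Lemma boundary_prefix j : j < a -> boundary (0 + j) = (j == 0).
Proof.
by move=> j_lt_a; rewrite /boundary add0n modn_small ?(ltn_eqF j_lt_a) ?orbF //; lia.
Qed.

Lemma boundary_suffix j : j < n - a -> boundary (a + j) = (j == 0).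
Proof.
move=> j_lt; rewrite /boundary modn_small; last by lia.
rewrite -{3}[a]addn0 eqn_add2l addn_eq0.
by case: (j == 0); rewrite ?orbT ?andbF.
Qed.

Lemma predl_mul_addd : b + d = a %[mod n].
Proof. by rewrite /b /a modnDml modn_mod -mulSnr subn1 prednK. Qed.

Lemma wX_cat_wXc : wX l m n d ++ wXc l m n d = wXh l m n d ++ flip0 (wX l m n d).
Proof.
rewrite (@subw_cat_mod l m n 0 a a (n - d)) //; congr (_ ++ _).
by apply: (subw_flip0 _ boundary_prefix); rewrite add0n subnK // modnn mod0n.
Qed.

Lemma wY_cat_wXh : wY l m n d ++ wXh l m n d = wXc l m n d ++ flip0 (wY l m n d).
Proof.
rewrite (@subw_cat_mod l m n a 0 (n - a) (n - d)); last first.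
  by rewrite (subnKC (ltnW a_lt_n)) modnn mod0n.
congr (_ ++ _); apply: (subw_flip0 _ boundary_suffix).
by rewrite -addnA subnK // modnDr.
Qed.

Lemma wYh_cat_wX : wYh l m n d ++ wX l m n d = flip0 (wX l m n d) ++ wYc l m n d.
Proof.
rewrite (@subw_cat_mod l m n (n - d) 0 d a); last by rewrite subnK // modnn mod0n.
congr (_ ++ _).
  by apply: (subw_flip0 _ boundary_prefix); rewrite subnK // modnn mod0n.
by apply: subw_mod; apply/eqP; rewrite -(eqn_modDr d) predl_mul_addd addnAC subnK // modnDl.
Qed.

Lemma wYc_cat_wY : wYc l m n d ++ wY l m n d = flip0 (wY l m n d) ++ wYh l m n d.
Proof.
rewrite (@subw_cat_mod l m n b a d (n - a)); last by rewrite predl_mul_addd.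
congr (_ ++ _); first exact: (subw_flip0 predl_mul_addd boundary_suffix).
apply: subw_mod; apply/eqP; rewrite -(eqn_modDr d) addnAC -modnDml predl_mul_addd modnDml.
by rewrite (subnKC (ltnW a_lt_n)) subnK.
Qed.

End Shift.

Theorem proposition3p4 (l m n d : nat) :
  0 < l -> 0 < m -> l < n -> m < n -> coprime m n ->
  is_inv_mod m n d ->
  [/\ wX l m n d ++ wXc l m n d = wXh l m n d ++ flip0 (wX l m n d),
      wY l m n d ++ wXh l m n d = wXc l m n d ++ flip0 (wY l m n d),
      wYh l m n d ++ wX l m n d = flip0 (wX l m n d) ++ wYc l m n d &
      wYc l m n d ++ wY l m n d = flip0 (wY l m n d) ++ wYh l m n d].
Proof.
move=> l_gt0 _ l_lt_n _ _ [/andP [_ d_le_predn] dmK].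
have d_le_n : d <= n := leq_trans d_le_predn (leq_pred n).
rewrite (@modn_small 1) in dmK; last exact: leq_ltn_trans l_gt0 l_lt_n.
by split; [apply: wX_cat_wXc | apply: wY_cat_wXh | apply: wYh_cat_wX | apply: wYc_cat_wY].
Qed.
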